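(* Let $\mathfrak V$ be an abstract h-strong super operator space. Then for each $n$ there exist an (ungraded) Hilbert space $\mathcal H_n$ and a linear map $\nu:M_n(\mathfrak V)\to\mathcal B(\mathcal H_n)$ with $\nu(x^* )=\nu(x)^\dagger$ (ordinary adjoint) which is strongly contractive, i.e. $\sup_{\Vert\xi\Vert\le1}|\langle\nu(x)\xi,\xi\rangle|\le\Vert x\Vert^s_n$ for all $x\in M_n(\mathfrak V)$, and hermitian isometric, i.e. $\Vert\nu(x)\Vert=\Vert x\Vert^s_n$ for all $x\in M_n(\mathfrak V)$ with $x=x^*$.
   Context: Let $\mathfrak V$ be a complex vector space with an antilinear involution $v\mapsto v^*$; on $M_n(\mathfrak V)$ put $[x_{ij}]^*=[x_{ji}^*]$. A strong matrix norm is a sequence of norms $\Vert\cdot\Vert^s_n$ on $M_n(\mathfrak V)$ satisfying $(\Sigma M1)$: $\Vert x\oplus y\Vert^s_{n+m}=\max\{\Vert x\Vert^s_n,\Vert y\Vert^s_m\}$, and $(\Sigma M2)$: $\Vert\alpha x\overline\alpha\Vert^s_n\le\Vert\alpha\Vert^2\Vert x\Vert^s_r$ for $\alpha\in M_{n,r}(\mathbb C)$, $x\in M_r(\mathfrak V)$. The induced ordinary matrix norm is $\Vert x\Vert_n:=2\left\Vert\begin{pmatrix}0&x\\0&0\end{pmatrix}\right\Vert^s_{2n}$. An abstract h-strong super operator space is such a $\mathfrak V$ (a super operator space for the induced matrix norms) whose strong matrix norm satisfies $(\Sigma M1)$, $(\Sigma M2)$, for which the involution is strongly completely antiisometric ($\Vert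 x^*\Vert^s_n=\Vert x\Vert^s_n$ for all $n$ and $x\in M_n(\mathfrak V)$), and which satisfies $(h\Sigma M* )$: $\Vert x\Vert^s_n=2\left\Vert\begin{pmatrix}0&x\\0&0\end{pmatrix}\right\Vert^s_{2n}$ for every hermitian $x=x^*\in M_n(\mathfrak V)$. *)

From HB Require Import structures.
From mathcomp Require Import all_boot all_order all_algebra.
From mathcomp Require Import boolp classical_sets reals.
From mathcomp Require Import complex.

Set Implicit Arguments.
Unset Strict Implicit.
Unset Printing Implicit Defensive.

Import Order.TTheory GRing.Theory Num.Theory.
Local Open Scope ring_scope.
Local Open Scope classical_set_scope.

Section SuperOpSpace.
Variable R : realType.
Local Notation C := (R[i]).

Definition cabs (z : C) : R := Normc.normc z.

Definition cvnorm r (xi : 'cV[C]_r) : R :=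
  Num.sqrt (\sum_(i < r) cabs (xi i 0) ^+ 2).

Definition mxopnorm n r (alpha : 'M[C]_(n, r)) : R :=
  sup [set cvnorm (alpha *m xi) | xi in [set xi : 'cV[C]_r | cvnorm xi <= 1]].

Variable V : lmodType C.
Variable star : V -> V.

Definition antilinear_involution :=
  (forall v, star (star v) = v) /\
  (forall (a : C) (v w : V), star (a *: v + w) = conjc a *: star v + star w).

Definition mxstar n (x : 'M[V]_n) : 'M[V]_n := \matrix_(i, j) star (x j i).

Definition mxscale n (a : C) (x : 'M[V]_n) : 'M[V]_n := map_mx ( *:%R a) x.

Definition dsum n m (x : 'M[V]_n) (y : 'M[V]_m) : 'M[V]_(n + m) :=
  block_mx x 0 0 y.

(* alpha x alpha-bar, with alpha-bar the conjugate transpose of alpha *)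
Definition congr_act n r (alpha : 'M[C]_(n, r)) (x : 'M[V]_r) : 'M[V]_n :=
  \matrix_(i, j) \sum_(k < r) \sum_(l < r) (alpha i k * conjc (alpha j l)) *: x k l.

Definition sandwich n r (alpha : 'M[C]_(n, r)) (x : 'M[V]_r) (beta : 'M[C]_(r, n))
  : 'M[V]_n :=
  \matrix_(i, j) \sum_(k < r) \sum_(l < r) (alpha i k * beta l j) *: x k l.

Variable ns : forall n, 'M[V]_n -> R.

Definition is_norm_seq :=
  forall n,
    (forall x : 'M[V]_n, ns x = 0 -> x = 0) /\
    (forall (a : C) (x : 'M[V]_n), ns (mxscale a x) = cabs a * ns x) /\
    (forall x y : 'M[V]_n, ns (x + y) <= ns x + ns y).

Definition SigmaM1 :=
  forall n m (x : 'M[V]_n) (y : 'M[V]_m), ns (dsum x y) = Num.max (ns x) (ns y).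

Definition SigmaM2 :=
  forall n r (alpha : 'M[C]_(n, r)) (x : 'M[V]_r),
    ns (congr_act alpha x) <= mxopnorm alpha ^+ 2 * ns x.

Definition indnorm n (x : 'M[V]_n) : R := 2 * ns (block_mx 0 x 0 0 : 'M[V]_(n + n)).

(* Ruan's axioms for the induced matrix norms (operator space structure) *)
Definition induced_operator_space :=
  (forall n m (x : 'M[V]_n) (y : 'M[V]_m),
      indnorm (dsum x y) = Num.max (indnorm x) (indnorm y)) /\
  (forall n r (alpha : 'M[C]_(n, r)) (x : 'M[V]_r) (beta : 'M[C]_(r, n)),
      indnorm (sandwich alpha x beta) <= mxopnorm alpha * indnorm x * mxopnorm beta).

Definition strongly_completely_antiisometric :=
  forall n (x : 'M[V]_n), ns (mxstar x) = ns x.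

Definition hSigmaMstar :=
  forall n (x : 'M[V]_n), mxstar x = x -> ns x = indnorm x.

Definition abstract_h_strong_super_operator_space :=
  antilinear_involution /\ is_norm_seq /\ induced_operator_space /\
  SigmaM1 /\ SigmaM2 /\ strongly_completely_antiisometric /\ hSigmaMstar.

End SuperOpSpace.

Section Hilbert.
Variable R : realType.
Local Notation C := (R[i]).
Variable H : lmodType C.
Variable ip : H -> H -> C.

Definition hnorm (u : H) : R := Num.sqrt (complex.Re (ip u u)).

Definition is_hilbert :=
  [/\ (forall (a : C) (u v w : H), ip (a *: u + v) w = a * ip u w + ip v w),
      (forall u v : H, ip v u = conjc (ip u v)),
      (forall u : H, u != 0 -> 0 < ip u u) &
      (forall s : nat -> H,
         (forall e : R, 0 < e -> exists N : nat, forall m k : nat,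
              (N <= m)%N -> (N <= k)%N -> hnorm (s m - s k) < e) ->
         exists l : H, forall e : R, 0 < e -> exists N : nat, forall m : nat,
              (N <= m)%N -> hnorm (s m - l) < e)].

Definition bounded_op (T : H -> H) :=
  (forall (a : C) (u v : H), T (a *: u + v) = a *: T u + T v) /\
  (exists M : R, forall u : H, hnorm (T u) <= M * hnorm u).

Definition unit_ball := [set u : H | hnorm u <= 1].

Definition hopnorm (T : H -> H) : R := sup [set hnorm (T u) | u in unit_ball].

Definition numrad (T : H -> H) : R := sup [set cabs (ip (T u) u) | u in unit_ball].

End Hilbert.

(* Only two properties of the strong matrix norm are needed: it is a norm on M_n(V) and the
   involution is isometric.  For each x, Hahn-Banach (proved via Zorn's lemma on sublinear
   minorants) gives a real functional g <= ||.||^s_n with g x = ||x||^s_n; averaging g with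
   g o * and complexifying yields a complex functional F_x with |F_x| <= ||.||^s_n,
   F_x(y^* ) = conj (F_x y), and Re (F_x x) = ||x||^s_n when x is hermitian.  On
   H_n = l^2(M_n(V)) let nu(y) multiply the x-th coordinate by F_x(y).  This diagonal
   operator has adjoint nu(y^* ), numerical radius and norm at most sup_x |F_x y| <= ||y||^s_n,
   and for hermitian y its y-th coordinate shows ||nu(y)|| >= |F_y y| = ||y||^s_n. *)

From HB Require Import structures.
From mathcomp Require Import all_boot all_order all_algebra.
From mathcomp Require Import boolp classical_sets reals.
From mathcomp Require Import complex.
From mathcomp Require Import topology normedtype.
From mathcomp Require Import ring lra.

Set Implicit Arguments.
Unset Strict Implicit.
Unset Printing Implicit Defensive.

Import Order.TTheory GRing.Theory Num.Theory numFieldNormedType.Exports.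
Local Open Scope ring_scope.
Local Open Scope classical_set_scope.

(** * Unordered sums *)

Section UnorderedSums.
Variables (R : realType) (S : eqType).
Implicit Types (f g h : S -> R) (A B : seq S).

(* Sums over arbitrary index types: finite partial sums range over duplicate-free lists. *)
Definition summable f := exists M : R, forall A, uniq A -> \sum_(s <- A) f s <= M.

Definition partial_sums f := [set \sum_(s <- A) f s | A in [set A | uniq A]].

Definition nnsum f : R := sup (partial_sums f).

Lemma partial_sums_neq0 f : partial_sums f !=set0.
Proof. by exists 0; exists [::] => //; rewrite big_nil. Qed.

Lemma sum_le_nnsum f A : summable f -> uniq A -> \sum_(s <- A) f s <= nnsum f.
Proof.
move=> [M hM] uA; apply: sup_upper_bound; last by exists A.
by split; [exact: partial_sums_neq0 | exists M => _ [B uB <-]; apply: hM].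
Qed.

Lemma nnsum_le f M : (forall A, uniq A -> \sum_(s <- A) f s <= M) -> nnsum f <= M.
Proof. by move=> hM; apply: ge_sup; [exact: partial_sums_neq0 | move=> _ [A uA <-]; apply: hM]. Qed.

Lemma nnsum_ge0 f : summable f -> 0 <= nnsum f.
Proof. by move=> sf; have := sum_le_nnsum sf (isT : uniq [::]); rewrite big_nil. Qed.

Lemma summable0 : summable (fun _ => 0).
Proof. by exists 0 => A _; rewrite big1. Qed.

Lemma summable_le f g : (forall s, f s <= g s) -> summable g -> summable f.
Proof.
move=> fg [M hM]; exists M => A uA; apply: le_trans (hM A uA).
by apply: ler_sum => s _; apply: fg.
Qed.

Lemma summableD f g : summable f -> summable g -> summable (fun s => f s + g s).
Proof.
move=> [M1 h1] [M2 h2]; exists (M1 + M2) => A uA; rewrite big_split /=.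
by apply: lerD; [apply: h1 | apply: h2].
Qed.

Lemma summableZ c f : 0 <= c -> summable f -> summable (fun s => c * f s).
Proof.
move=> c0 [M hM]; exists (c * M) => A uA; rewrite -mulr_sumr.
by apply: ler_wpM2l => //; apply: hM.
Qed.

Lemma ler_nnsum f g : (forall s, f s <= g s) -> summable g -> nnsum f <= nnsum g.
Proof.
move=> fg sg; apply: nnsum_le => A uA; apply: le_trans (sum_le_nnsum sg uA).
by apply: ler_sum => s _; apply: fg.
Qed.

Lemma nnsum0 : nnsum (fun _ => 0) = 0.
Proof.
apply/eqP; rewrite eq_le nnsum_ge0 ?andbT; last exact: summable0.
by apply: nnsum_le => A _; rewrite big1.
Qed.

Lemma ler_sum_subset f A B : (forall s, 0 <= f s) -> uniq A -> uniq B ->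
  {subset A <= B} -> \sum_(s <- A) f s <= \sum_(s <- B) f s.
Proof.
move=> f0 uA uB sAB; rewrite [leRHS](bigID (mem A)) /=.
have -> : \sum_(s <- B | s \in A) f s = \sum_(s <- A) f s.
  rewrite -big_filter; apply: perm_big; apply: uniq_perm; rewrite ?filter_uniq //.
  by move=> x; rewrite mem_filter; apply/andP/idP => [[] // | xA]; split => //; apply: sAB.
by rewrite lerDl sumr_ge0.
Qed.

Lemma nnsumD f g : (forall s, 0 <= f s) -> (forall s, 0 <= g s) ->
  summable f -> summable g -> nnsum (fun s => f s + g s) = nnsum f + nnsum g.
Proof.
move=> f0 g0 sf sg; apply/eqP; rewrite eq_le; apply/andP; split.
  apply: nnsum_le => A uA; rewrite big_split /=.
  by apply: lerD; apply: sum_le_nnsum.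
rewrite -lerBrDr; apply: nnsum_le => A uA; rewrite lerBrDr addrC -lerBrDr.
apply: nnsum_le => B uB; rewrite lerBrDr addrC.
have uAB : uniq (undup (A ++ B)) by exact: undup_uniq.
apply: le_trans (sum_le_nnsum (summableD sf sg) uAB); rewrite big_split /=.
by apply: lerD; apply: ler_sum_subset => // s sX; rewrite mem_undup mem_cat sX ?orbT.
Qed.

Lemma nnsumZ c f : 0 <= c -> (forall s, 0 <= f s) -> summable f ->
  nnsum (fun s => c * f s) = c * nnsum f.
Proof.
move=> c0 f0 sf; apply/eqP; rewrite eq_le; apply/andP; split.
  apply: nnsum_le => A uA; rewrite -mulr_sumr.
  by apply: ler_wpM2l => //; apply: sum_le_nnsum.
have [->|cn0] := eqVneq c 0; first by rewrite mul0r nnsum_ge0 //; apply: summableZ.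
have cp : 0 < c by rewrite lt_def cn0.
rewrite mulrC -ler_pdivlMr //; apply: nnsum_le => A uA.
rewrite ler_pdivlMr // mulrC mulr_sumr.
exact: sum_le_nnsum (summableZ c0 sf) uA.
Qed.

(* Junk unless [abs_summable f]. *)
Definition abs_summable f := summable (fun s => `|f s|).

Definition asum f := nnsum (fun s => f s + `|f s|) - nnsum (fun s => `|f s|).

Lemma addr_norm_ge0 (x : R) : 0 <= x + `|x|.
Proof. by have := ler_norm (- x); rewrite normrN; lra. Qed.

Lemma summable_addr_norm f : abs_summable f -> summable (fun s => f s + `|f s|).
Proof.
move=> [M hM]; exists (2 * M) => A uA.
apply: le_trans (_ : _ <= \sum_(s <- A) 2 * `|f s|) _.
  by apply: ler_sum => s _; have := ler_norm (f s); lra.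
by rewrite -mulr_sumr; have := hM A uA; lra.
Qed.

Lemma abs_summable_le f g : (forall s, `|f s| <= g s) -> summable g -> abs_summable f.
Proof. exact: summable_le. Qed.

Lemma abs_summableD f g : abs_summable f -> abs_summable g ->
  abs_summable (fun s => f s + g s).
Proof. by move=> af ag; apply: abs_summable_le (summableD af ag) => s; apply: ler_normD. Qed.

Lemma abs_summableZ c f : abs_summable f -> abs_summable (fun s => c * f s).
Proof. by move=> af; apply: abs_summable_le (summableZ (normr_ge0 c) af) => s; rewrite normrM. Qed.

Lemma asum_split f g h : (forall s, 0 <= g s) -> (forall s, 0 <= h s) ->
  summable g -> summable h -> (forall s, f s = g s - h s) -> abs_summable f ->
  asum f = nnsum g - nnsum h.
Proof.
move=> g0 h0 sg sh fE af.
have : nnsum (fun s => f s + `|f s|) + nnsum h = nnsum g + nnsum (fun s => `|f s|).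
  rewrite -(nnsumD (fun s => addr_norm_ge0 (f s)) h0 (summable_addr_norm af) sh).
  rewrite -(nnsumD g0 (fun s => normr_ge0 (f s)) sg af).
  by congr nnsum; apply: funext => s; rewrite fE addrAC subrK.
by rewrite /asum; lra.
Qed.

Lemma asum_nnsum f : (forall s, 0 <= f s) -> summable f -> asum f = nnsum f.
Proof.
move=> f0 sf; rewrite (@asum_split f f (fun _ => 0)) ?nnsum0 ?subr0 //.
- exact: summable0.
- by move=> s; rewrite subr0.
- by apply: abs_summable_le sf => s; rewrite ger0_norm.
Qed.

Lemma asumD f g : abs_summable f -> abs_summable g ->
  asum (fun s => f s + g s) = asum f + asum g.
Proof.
move=> af ag; have n0 (k : S -> R) s : 0 <= `|k s| by [].
have p0 (k : S -> R) s : 0 <= k s + `|k s| by exact: addr_norm_ge0.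
rewrite (@asum_split _ (fun s => (f s + `|f s|) + (g s + `|g s|))
                      (fun s => `|f s| + `|g s|)).
- rewrite (nnsumD (p0 f) (p0 g) (summable_addr_norm af) (summable_addr_norm ag)).
  by rewrite (nnsumD (n0 f) (n0 g) af ag) /asum; lra.
- by move=> s; rewrite addr_ge0.
- by move=> s; rewrite addr_ge0.
- by apply: summableD; apply: summable_addr_norm.
- exact: summableD.
- by move=> s; lra.
- exact: abs_summableD.
Qed.

Lemma asumZ c f : abs_summable f -> asum (fun s => c * f s) = c * asum f.
Proof.
move=> af; have sp := summable_addr_norm af.
have p0 s : 0 <= f s + `|f s| by exact: addr_norm_ge0.
have [c0|c0] := lerP 0 c.
  rewrite (@asum_split _ (fun s => c * (f s + `|f s|)) (fun s => c * `|f s|)).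
  - by rewrite (nnsumZ c0 p0 sp) (nnsumZ c0 _ af) /asum //; lra.
  - by move=> s; rewrite mulr_ge0 ?addr_norm_ge0.
  - by move=> s; rewrite mulr_ge0.
  - exact: summableZ.
  - exact: summableZ.
  - by move=> s; lra.
  - exact: abs_summableZ.
have nc : 0 <= - c by lra.
rewrite (@asum_split _ (fun s => - c * `|f s|) (fun s => - c * (f s + `|f s|))).
- by rewrite (nnsumZ nc p0 sp) (nnsumZ nc _ af) /asum //; lra.
- by move=> s; rewrite mulr_ge0.
- by move=> s; rewrite mulr_ge0 ?addr_norm_ge0.
- exact: summableZ.
- exact: summableZ.
- by move=> s; lra.
- exact: abs_summableZ.
Qed.

Lemma asum_lin (a b : R) (f g k : S -> R) :
  abs_summable f -> abs_summable g -> abs_summable k ->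
  asum (fun s => a * f s + b * g s + k s) = a * asum f + b * asum g + asum k.
Proof.
move=> af ag ak.
rewrite (asumD (abs_summableD (abs_summableZ a af) (abs_summableZ b ag)) ak).
by rewrite (asumD (abs_summableZ a af) (abs_summableZ b ag)) !asumZ.
Qed.

Lemma ler_asum f g : abs_summable f -> abs_summable g -> (forall s, f s <= g s) ->
  asum f <= asum g.
Proof.
move=> af ag fg; have ad := abs_summableD ag (abs_summableZ (-1) af).
have : 0 <= asum (fun s => g s + (-1) * f s).
  have sd : summable (fun s => g s + (-1) * f s) by apply: summable_le ad => s; apply: ler_norm.
  rewrite asum_nnsum ?nnsum_ge0 // => s; have := fg s; lra.
by rewrite asumD ?asumZ //; [lra | exact: abs_summableZ].
Qed.

End UnorderedSums.

(** * The Hilbert space l^2(S) *)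

Local Notation Re := complex.Re.
Local Notation Im := complex.Im.

Section ComplexSquareNorm.
Variable R : realType.
Local Notation C := R[i].
Implicit Types z w : C.

Lemma complex_ext z w : Re z = Re w -> Im z = Im w -> z = w.
Proof. by case: z => a b; case: w => c d /= -> ->. Qed.

Lemma ReJ z : Re z^*%C = Re z.
Proof. by case: z. Qed.

Lemma ImJ z : Im z^*%C = - Im z.
Proof. by case: z. Qed.

(* The square of the modulus, kept free of square roots so that [nra] can handle it. *)
Definition sqnormc z : R := Re z ^+ 2 + Im z ^+ 2.

Lemma sqnormc_ge0 z : 0 <= sqnormc z.
Proof. by rewrite addr_ge0 ?sqr_ge0. Qed.

Lemma sqnormc_eq0 z : sqnormc z = 0 -> z = 0.
Proof.
case: z => a b; rewrite /sqnormc /= => h.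
have /eqP : a ^+ 2 = 0 by have := sqr_ge0 a; have := sqr_ge0 b; lra.
have /eqP : b ^+ 2 = 0 by have := sqr_ge0 a; have := sqr_ge0 b; lra.
by rewrite !sqrf_eq0 => /eqP b0 /eqP a0; rewrite a0 b0.
Qed.

Lemma sqnormcD z w : sqnormc (z + w) <= 2 * sqnormc z + 2 * sqnormc w.
Proof.
case: z w => [a b] [c d]; rewrite /sqnormc /=.
by have := sqr_ge0 (a - c); have := sqr_ge0 (b - d); nra.
Qed.

Lemma sqnormcM z w : sqnormc (z * w) = sqnormc z * sqnormc w.
Proof. by case: z w => [a b] [c d]; rewrite /sqnormc /=; ring. Qed.

Lemma sqnormcN z : sqnormc (- z) = sqnormc z.
Proof. by case: z => a b; rewrite /sqnormc /= !sqrrN. Qed.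

Lemma sqnormc_Re_Im_mulJ z w :
  `|Re (z * w^*%C)| <= (sqnormc z + sqnormc w) / 2 /\
  `|Im (z * w^*%C)| <= (sqnormc z + sqnormc w) / 2.
Proof.
case: z w => [a b] [c d]; rewrite /sqnormc /= !ler_norml.
have := sqr_ge0 (a - c); have := sqr_ge0 (b - d); have := sqr_ge0 (a + c).
have := sqr_ge0 (b + d); have := sqr_ge0 (a - d); have := sqr_ge0 (b - c).
have := sqr_ge0 (a + d); have := sqr_ge0 (b + c).
by split; apply/andP; split; nra.
Qed.

Lemma sqr_cabs z : cabs z ^+ 2 = sqnormc z.
Proof. by case: z => a b; rewrite /cabs /= sqr_sqrtr // addr_ge0 ?sqr_ge0. Qed.

Lemma cabs_ge0 z : 0 <= cabs z.
Proof. by case: z => a b; rewrite /cabs /= sqrtr_ge0. Qed.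

Lemma cabs_real (r : R) : cabs r%:C%C = `|r|.
Proof. by rewrite /cabs /= expr0n /= addr0 sqrtr_sqr. Qed.

Lemma cabsM z w : cabs (z * w) = cabs z * cabs w.
Proof. exact: Normc.normcM. Qed.

Lemma cabsJ z : cabs z^*%C = cabs z.
Proof. by case: z => a b; rewrite /cabs /= sqrrN. Qed.

Lemma Re_le_cabs z : Re z <= cabs z.
Proof.
apply: le_trans (ler_norm _) _; rewrite -ler_sqr ?nnegrE ?cabs_ge0 //.
by rewrite real_normK ?num_real // sqr_cabs lerDl sqr_ge0.
Qed.

End ComplexSquareNorm.

Section SquareSummable.
Variables (R : realType) (S : eqType).
Local Notation C := R[i].
Implicit Types u v : S -> C.

Definition square_summable u := summable (fun s => sqnormc (u s)).

Lemma square_summable0 : square_summable (fun _ => 0).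
Proof. by apply: summable_le (@summable0 R S) => s; rewrite /sqnormc /= expr0n /= addr0. Qed.

Lemma square_summableD u v : square_summable u -> square_summable v ->
  square_summable (fun s => u s + v s).
Proof.
move=> su sv; have two_ge0 : 0 <= 2 :> R by [].
apply: summable_le (summableD (summableZ two_ge0 su) (summableZ two_ge0 sv)) => s.
exact: sqnormcD.
Qed.

Lemma square_summableZ (c : C) u : square_summable u -> square_summable (fun s => c * u s).
Proof. by move=> su; apply: summable_le (summableZ (sqnormc_ge0 c) su) => s; rewrite sqnormcM. Qed.

Lemma square_summableN u : square_summable u -> square_summable (fun s => - u s).
Proof. by move=> su; apply: summable_le su => s; rewrite sqnormcN. Qed.

Record l2 := L2 { l2_val :> S -> C; l2_square_summable : square_summable l2_val }.

Lemma l2_ext (u v : l2) : (forall s, u s = v s) -> u = v.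
Proof.
case: u v => [f sf] [g sg] /= /funext fg; subst g.
by congr L2; exact: Prop_irrelevance.
Qed.

Definition l2_zero := L2 square_summable0.
Definition l2_add (u v : l2) := L2 (square_summableD (l2_square_summable u) (l2_square_summable v)).
Definition l2_opp (u : l2) := L2 (square_summableN (l2_square_summable u)).
Definition l2_scale (c : C) (u : l2) := L2 (square_summableZ c (l2_square_summable u)).

Lemma l2_addA : associative l2_add.
Proof. by move=> u v w; apply: l2_ext => s /=; rewrite addrA. Qed.

Lemma l2_addC : commutative l2_add.
Proof. by move=> u v; apply: l2_ext => s /=; rewrite addrC. Qed.

Lemma l2_add0 : left_id l2_zero l2_add.
Proof. by move=> u; apply: l2_ext => s /=; rewrite add0r. Qed.

Lemma l2_addN : left_inverse l2_zero l2_opp l2_add.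
Proof. by move=> u; apply: l2_ext => s /=; rewrite addNr. Qed.

Lemma l2_scaleA a b (u : l2) : l2_scale a (l2_scale b u) = l2_scale (a * b) u.
Proof. by apply: l2_ext => s /=; rewrite mulrA. Qed.

Lemma l2_scale1 : left_id 1 l2_scale.
Proof. by move=> u; apply: l2_ext => s /=; rewrite mul1r. Qed.

Lemma l2_scaleDr : right_distributive l2_scale l2_add.
Proof. by move=> a u v; apply: l2_ext => s /=; rewrite mulrDr. Qed.

Lemma l2_scaleDl (u : l2) : {morph l2_scale^~ u : a b / a + b >-> l2_add a b}.
Proof. by move=> a b; apply: l2_ext => s /=; rewrite mulrDl. Qed.

End SquareSummable.

HB.instance Definition _ (R : realType) (S : eqType) := gen_eqMixin (l2 R S).
HB.instance Definition _ (R : realType) (S : eqType) := gen_choiceMixin (l2 R S).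
HB.instance Definition _ (R : realType) (S : eqType) :=
  GRing.isZmodule.Build (l2 R S) (@l2_addA R S) (@l2_addC R S) (@l2_add0 R S) (@l2_addN R S).
HB.instance Definition _ (R : realType) (S : eqType) :=
  GRing.Zmodule_isLmodule.Build R[i] (l2 R S) (@l2_scaleA R S) (@l2_scale1 R S)
    (@l2_scaleDr R S) (@l2_scaleDl R S).

Section L2InnerProduct.
Variables (R : realType) (S : eqType).
Local Notation C := R[i].
Local Notation H := (l2 R S).
Implicit Types u v w : H.

Definition l2_dot_Re u v s := Re (u s * (v s)^*%C).
Definition l2_dot_Im u v s := Im (u s * (v s)^*%C).

Definition l2_dot u v : C := (asum (l2_dot_Re u v) +i* asum (l2_dot_Im u v))%C.

Local Notation l2_norm := (hnorm l2_dot).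

Lemma summable_half_sqnormc u v : summable (fun s => (sqnormc (u s) + sqnormc (v s)) / 2).
Proof.
apply: summable_le (summableZ (_ : 0 <= 2^-1) (summableD (l2_square_summable u) (l2_square_summable v))).
  by move=> s; rewrite mulrC.
by rewrite invr_ge0 ler0n.
Qed.

Lemma abs_summable_dot_Re u v : abs_summable (l2_dot_Re u v).
Proof. by apply: abs_summable_le (summable_half_sqnormc u v) => s; case: (sqnormc_Re_Im_mulJ (u s) (v s)). Qed.

Lemma abs_summable_dot_Im u v : abs_summable (l2_dot_Im u v).
Proof. by apply: abs_summable_le (summable_half_sqnormc u v) => s; case: (sqnormc_Re_Im_mulJ (u s) (v s)). Qed.

Lemma l2_dot_linear (a : C) u v w : l2_dot (a *: u + v) w = a * l2_dot u w + l2_dot v w.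
Proof.
have aRe := abs_summable_dot_Re; have aIm := abs_summable_dot_Im.
case: a => a b; apply: complex_ext => /=.
  have -> : l2_dot_Re ((a +i* b)%C *: u + v) w =
      (fun s => a * l2_dot_Re u w s + (- b) * l2_dot_Im u w s + l2_dot_Re v w s).
    apply: funext => s; rewrite /l2_dot_Re /l2_dot_Im /=.
    by case: (u s) (v s) (w s) => [x1 y1] [x2 y2] [x3 y3] /=; ring.
  by rewrite asum_lin //; ring.
have -> : l2_dot_Im ((a +i* b)%C *: u + v) w =
    (fun s => a * l2_dot_Im u w s + b * l2_dot_Re u w s + l2_dot_Im v w s).
  apply: funext => s; rewrite /l2_dot_Re /l2_dot_Im /=.
  by case: (u s) (v s) (w s) => [x1 y1] [x2 y2] [x3 y3] /=; ring.
by rewrite asum_lin //; ring.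
Qed.

Lemma l2_dot0l w : l2_dot 0 w = 0.
Proof.
have := l2_dot_linear 1 0 0 w; rewrite scaler0 addr0 mul1r => e.
by apply: (addrI (l2_dot 0 w)); rewrite -e addr0.
Qed.

Lemma l2_dotZ (a : C) u w : l2_dot (a *: u) w = a * l2_dot u w.
Proof. by rewrite -[a *: u]addr0 l2_dot_linear l2_dot0l addr0. Qed.

Lemma l2_dotC u v : l2_dot v u = (l2_dot u v)^*%C.
Proof.
apply: complex_ext => /=.
  by congr asum; apply: funext => s; rewrite /l2_dot_Re; case: (u s) (v s) => [a b] [c d] /=; ring.
rewrite -[RHS]mulN1r -(asumZ (-1) (abs_summable_dot_Im u v)); congr asum; apply: funext => s.
by rewrite /l2_dot_Im; case: (u s) (v s) => [a b] [c d] /=; ring.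
Qed.

Lemma l2_dot_self u : l2_dot u u = (nnsum (fun s => sqnormc (u s)))%:C%C.
Proof.
have sqE : l2_dot_Re u u = fun s => sqnormc (u s).
  by apply: funext => s; rewrite /l2_dot_Re /sqnormc; case: (u s) => a b /=; ring.
have imE : l2_dot_Im u u = fun _ => 0.
  by apply: funext => s; rewrite /l2_dot_Im; case: (u s) => a b /=; ring.
rewrite /l2_dot sqE imE !asum_nnsum ?nnsum0 //.
- exact: (@summable0 R S).
- by move=> s; apply: sqnormc_ge0.
- exact: l2_square_summable.
Qed.

Lemma sqr_l2_norm u : l2_norm u ^+ 2 = nnsum (fun s => sqnormc (u s)).
Proof. by rewrite /hnorm l2_dot_self sqr_sqrtr // nnsum_ge0 //; exact: l2_square_summable. Qed.

Lemma l2_norm0 : l2_norm 0 = 0.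
Proof. by rewrite /hnorm l2_dot0l sqrtr0. Qed.

Lemma l2_norm_ge0 u : 0 <= l2_norm u.
Proof. exact: sqrtr_ge0. Qed.

Lemma sqnormc_le_l2_norm u s : sqnormc (u s) <= l2_norm u ^+ 2.
Proof.
rewrite sqr_l2_norm; have := sum_le_nnsum (l2_square_summable u) (isT : uniq [:: s]).
by rewrite big_seq1.
Qed.

Lemma l2_dot_gt0 u : u != 0 -> 0 < l2_dot u u.
Proof.
move=> u0; rewrite l2_dot_self ltcR.
have [s us] : exists s, u s != 0.
  apply/not_existsP => nu; move/eqP: u0; apply; apply: l2_ext => s.
  by apply/eqP/negPn/negP; apply: nu.
rewrite -sqr_l2_norm; apply: lt_le_trans (sqnormc_le_l2_norm u s).
by rewrite lt_def sqnormc_ge0 andbT; apply: contraNneq us => /sqnormc_eq0 ->.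
Qed.

End L2InnerProduct.

Lemma cauchy_real_cvg (R : realType) (a : nat -> R) :
  (forall e : R, 0 < e -> exists N, forall m k, (N <= m)%N -> (N <= k)%N -> `|a m - a k| < e) ->
  exists L, forall e : R, 0 < e -> exists N, forall m, (N <= m)%N -> `|a m - L| < e.
Proof.
move=> a_cauchy; have : cauchy (a @ \oo).
  apply: cauchy_exP => e e0; have [N hN] := a_cauchy e e0.
  by exists (a N); exists N => // m hm; rewrite /ball /= -normrN opprB; apply: hN.
move=> /cauchy_cvgP /cvg_ex [L /cvgrPdist_lt aL]; exists L => e /aL [N _ hN].
by exists N => m hm; rewrite distrC; apply: hN.
Qed.

Lemma eventually_all_in (S : eqType) (P : S -> nat -> Prop) :
  (forall s, exists N, forall m, (N <= m)%N -> P s m) ->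
  forall A : seq S, exists K, forall m, (K <= m)%N -> forall s, s \in A -> P s m.
Proof.
move=> hP; elim=> [|a A [K hK]]; first by exists 0%N.
have [Na hNa] := hP a; exists (maxn Na K) => m; rewrite geq_max => /andP[am Km] s.
by rewrite in_cons => /orP[/eqP -> | sA]; [apply: hNa | apply: hK].
Qed.

Section L2Complete.
Variables (R : realType) (S : eqType).
Local Notation C := R[i].
Local Notation H := (l2 R S).
Local Notation l2_norm := (hnorm (@l2_dot R S)).

Lemma normr_Re_le_l2_norm (u : H) s : `|Re (u s)| <= l2_norm u.
Proof.
rewrite -ler_sqr ?nnegrE ?l2_norm_ge0 // real_normK ?num_real //.
by apply: le_trans (sqnormc_le_l2_norm u s); rewrite lerDl sqr_ge0.
Qed.

Lemma normr_Im_le_l2_norm (u : H) s : `|Im (u s)| <= l2_norm u.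
Proof.
rewrite -ler_sqr ?nnegrE ?l2_norm_ge0 // real_normK ?num_real //.
by apply: le_trans (sqnormc_le_l2_norm u s); rewrite lerDr sqr_ge0.
Qed.

Variable U : nat -> H.
Hypothesis U_cauchy : forall e : R, 0 < e -> exists N : nat, forall m k : nat,
  (N <= m)%N -> (N <= k)%N -> l2_norm (U m - U k) < e.

Lemma l2_cauchy_pointwise_cvg : exists l : S -> C, forall s (e : R), 0 < e ->
  exists N, forall m, (N <= m)%N -> sqnormc (U m s - l s) < e.
Proof.
have coord_cvg (coord : C -> R) : (forall z w, coord (z - w) = coord z - coord w) ->
    (forall (u : H) s, `|coord (u s)| <= l2_norm u) ->
    forall s, exists L, forall e : R, 0 < e -> exists N, forall m, (N <= m)%N ->
      `|coord (U m s) - L| < e.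
  move=> coordB coord_le s; apply: cauchy_real_cvg => e /U_cauchy [N hN].
  exists N => m k mN kN; rewrite -coordB.
  exact: le_lt_trans (coord_le (U m - U k) s) (hN m k mN kN).
have ReB (z w : C) : Re (z - w) = Re z - Re w by case: z w => [? ?] [? ?].
have ImB (z w : C) : Im (z - w) = Im z - Im w by case: z w => [? ?] [? ?].
have [Lr hLr] := choice (coord_cvg _ ReB normr_Re_le_l2_norm).
have [Li hLi] := choice (coord_cvg _ ImB normr_Im_le_l2_norm).
exists (fun s => Lr s +i* Li s)%C => s e e0.
have e2 : 0 < e / 2 by rewrite divr_gt0.
have d0 : 0 < Num.sqrt (e / 2) by rewrite sqrtr_gt0.
have sqr_lt x : `|x| < Num.sqrt (e / 2) -> x ^+ 2 < e / 2.
  move=> hx; rewrite -(real_normK (num_real x)) -[e / 2](sqr_sqrtr (ltW e2)).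
  by rewrite ltr_sqr ?nnegrE ?sqrtr_ge0.
have [Nr hNr] := hLr s _ d0; have [Ni hNi] := hLi s _ d0.
exists (maxn Nr Ni) => m; rewrite geq_max => /andP[mr mi].
rewrite /sqnormc ReB ImB /=.
by have := sqr_lt _ (hNr m mr); have := sqr_lt _ (hNi m mi); lra.
Qed.

Lemma l2_cauchy_tail (l : S -> C) :
    (forall s (e : R), 0 < e -> exists N, forall m, (N <= m)%N -> sqnormc (U m s - l s) < e) ->
  forall d : R, 0 < d -> exists N, forall m, (N <= m)%N -> forall A : seq S, uniq A ->
    \sum_(s <- A) sqnormc (U m s - l s) <= 4 * d ^+ 2.
Proof.
move=> l_cvg d d0; have [N hN] := U_cauchy d0; exists N => m mN A uA.
(* Compare with a later [U k], chosen so that the tolerance [d^2 / (size A + 1)] holds on all of [A]. *)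
pose eta := d ^+ 2 / (size A).+1%:R.
have eta0 : 0 < eta by rewrite divr_gt0 // exprn_gt0.
have [K hK] := eventually_all_in (fun s => l_cvg s eta eta0) A.
pose k := maxn N K.
have Uk_near_l : \sum_(s <- A) sqnormc (U k s - l s) <= d ^+ 2.
  apply: le_trans (_ : \sum_(s <- A) eta <= _).
    rewrite big_seq [leRHS]big_seq; apply: ler_sum => s sA.
    by apply/ltW/hK; rewrite ?leq_maxr.
  rewrite big_const_seq count_predT iter_addr addr0.
  apply: le_trans (ler_wpMn2l (ltW eta0) (leqnSn (size A))) _.
  by rewrite -mulr_natr divfK // pnatr_eq0.
have Um_near_Uk : \sum_(s <- A) sqnormc (U m s - U k s) <= d ^+ 2.
  apply: le_trans (sum_le_nnsum (l2_square_summable (U m - U k)) uA) _.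
  rewrite -sqr_l2_norm; apply/ltW; rewrite ltr_sqr ?nnegrE ?l2_norm_ge0 ?ltW //.
  by apply: hN; rewrite ?leq_maxl.
apply: le_trans (_ : \sum_(s <- A) (2 * sqnormc (U m s - U k s) + 2 * sqnormc (U k s - l s)) <= _).
  by apply: ler_sum => s _; have := sqnormcD (U m s - U k s) (U k s - l s); rewrite addrA subrK.
by rewrite big_split /= -!mulr_sumr; lra.
Qed.

Lemma l2_complete : exists l : H, forall e : R, 0 < e -> exists N : nat, forall m : nat,
  (N <= m)%N -> l2_norm (U m - l) < e.
Proof.
have [l l_cvg] := l2_cauchy_pointwise_cvg.
have l_tail := l2_cauchy_tail l_cvg.
have l_sq : square_summable l.
  have [N hN] := l_tail 1 ltr01; have [M hM] := l2_square_summable (U N).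
  exists (2 * M + 2 * (4 * 1 ^+ 2)) => A uA.
  apply: le_trans (_ : \sum_(s <- A) (2 * sqnormc (U N s) + 2 * sqnormc (U N s - l s)) <= _).
    apply: ler_sum => s _; have := sqnormcD (U N s) (l s - U N s).
    by rewrite addrC subrK -[sqnormc (l s - _)]sqnormcN opprB.
  by rewrite big_split /= -!mulr_sumr; have := hM A uA; have := hN N (leqnn N) A uA; lra.
exists (L2 l_sq) => e e0; have e3 : 0 < e / 3 by rewrite divr_gt0.
have [N hN] := l_tail _ e3; exists N => m mN.
rewrite -ltr_sqr ?nnegrE ?l2_norm_ge0 ?ltW // sqr_l2_norm.
apply: le_lt_trans (_ : 4 * (e / 3) ^+ 2 < _); first exact: nnsum_le (hN m mN).
by rewrite !expr2; nra.
Qed.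

End L2Complete.

Lemma l2_is_hilbert (R : realType) (S : eqType) : is_hilbert (@l2_dot R S).
Proof.
split; [exact: l2_dot_linear | exact: l2_dotC | exact: l2_dot_gt0 | exact: l2_complete].
Qed.

(** * Hahn-Banach *)

Section HahnBanach.
Variables (R : realType) (X : lmodType R).
Implicit Types (q : X -> R) (x y : X).

Definition sublinear q :=
  (forall x y, q (x + y) <= q x + q y) /\ (forall (r : R) x, 0 < r -> q (r *: x) = r * q x).

Lemma pos_homogeneous_le (f : X -> R) :
  (forall (r : R) x, 0 < r -> f (r *: x) <= r * f x) ->
  forall (r : R) x, 0 < r -> f (r *: x) = r * f x.
Proof.
move=> f_le r x rp; apply/eqP; rewrite eq_le f_le //=.
have := f_le r^-1 (r *: x); rewrite invr_gt0 scalerA mulVf ?gt_eqF // scale1r => /(_ rp).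
by rewrite -ler_pdivlMl.
Qed.

Section SublinearTheory.
Variable q : X -> R.
Hypothesis q_sublinear : sublinear q.

Lemma sublinear0 : q 0 = 0.
Proof. by have := q_sublinear.2 2 0 (ltr0Sn R 1); rewrite scaler0; lra. Qed.

Lemma sublinearZ_ge0 (t : R) x : 0 <= t -> q (t *: x) = t * q x.
Proof.
rewrite le_eqVlt => /predU1P[<- | tp]; last exact: q_sublinear.2.
by rewrite scale0r sublinear0 mul0r.
Qed.

Lemma sublinearN_ge x : - q (- x) <= q x.
Proof. by have := q_sublinear.1 x (- x); rewrite addrN sublinear0; lra. Qed.

(* A sublinear minorant of [q] with [dir_inf x y + q x <= q (y + x)], so a minimal
   sublinear functional is additive. *)
Definition dir_inf x y : R := inf [set q (y + t *: x) - t * q x | t in [set t : R | 0 <= t]].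

Variable x : X.

Lemma has_inf_dir y : has_inf [set q (y + t *: x) - t * q x | t in [set t : R | 0 <= t]].
Proof.
split; first by exists (q (y + 0 *: x) - 0 * q x); exists 0 => //=.
exists (- q (- y)) => _ [t t0 <-]; have := q_sublinear.1 (y + t *: x) (- y).
by rewrite addrC addKr sublinearZ_ge0 //; lra.
Qed.

Lemma dir_inf_le y (t : R) : 0 <= t -> dir_inf x y <= q (y + t *: x) - t * q x.
Proof. by move=> t0; apply: ge_inf; [exact: (has_inf_dir y).2 | exists t]. Qed.

Lemma dir_inf_le_self y : dir_inf x y <= q y.
Proof. by have := dir_inf_le y (lexx 0); rewrite scale0r addr0 mul0r subr0. Qed.

Lemma dir_inf_shift y : dir_inf x y <= q (y + x) - q x.
Proof. by have := dir_inf_le y ler01; rewrite scale1r mul1r. Qed.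

Lemma dir_inf_sublinear : sublinear (dir_inf x).
Proof.
split=> [y1 y2 | ].
  apply/ler_addgt0Pr => e e0; have e2 : 0 < e / 2 by rewrite divr_gt0.
  have [_ [t1 t10 <-] h1] := inf_adherent e2 (has_inf_dir y1).
  have [_ [t2 t20 <-] h2] := inf_adherent e2 (has_inf_dir y2).
  apply: le_trans (dir_inf_le (y1 + y2) (addr_ge0 t10 t20)) _.
  have := q_sublinear.1 (y1 + t1 *: x) (y2 + t2 *: x).
  by rewrite addrACA -scalerDl mulrDl; rewrite /dir_inf in h1 h2 *; lra.
apply: pos_homogeneous_le => r y rp; rewrite -ler_pdivrMl //.
apply: lb_le_inf; first by case: (has_inf_dir y).
move=> _ [t t0 <-]; rewrite ler_pdivrMl //.
apply: le_trans (dir_inf_le _ (mulr_ge0 (ltW rp) t0)) _.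
by rewrite -scalerA -scalerDr q_sublinear.2 // mulrBr mulrA.
Qed.

End SublinearTheory.

Variable p : X -> R.
Hypothesis p_sublinear : sublinear p.
Variable h : X.

(* Sublinear minorants of [p] that already "see" [h]; a minimal one is linear and equals [p] at [h]. *)
Definition hb_candidate q := [/\ sublinear q, forall y, q y <= p y & q (- h) <= - p h].

Lemma hb_candidate_dir_inf : hb_candidate (dir_inf p h).
Proof.
split; [exact: dir_inf_sublinear | exact: dir_inf_le_self |].
by have := dir_inf_shift p_sublinear h (- h); rewrite addNr sublinear0 // sub0r.
Qed.

Section Chain.
Variable A : set (X -> R).
Hypothesis A_candidate : forall q, A q -> hb_candidate q.
Hypothesis A_total : forall q1 q2, A q1 -> A q2 -> (forall y, q1 y <= q2 y) \/ (forall y, q2 y <= q1 y).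
Variable q0 : X -> R.
Hypothesis A_q0 : A q0.

Definition chain_inf y := inf [set q y | q in A].

Lemma has_inf_chain y : has_inf [set q y | q in A].
Proof.
split; first by exists (q0 y); exists q0.
exists (- p (- y)) => _ [q Aq <-]; have [q_sub q_le _] := A_candidate Aq.
by have := sublinearN_ge q_sub y; have := q_le (- y); lra.
Qed.

Lemma chain_inf_le q y : A q -> chain_inf y <= q y.
Proof. by move=> Aq; apply: ge_inf; [exact: (has_inf_chain y).2 | exists q]. Qed.

Lemma chain_inf_candidate : hb_candidate chain_inf.
Proof.
have [q0_sub q0_le q0_h] := A_candidate A_q0.
split; last 2 first.
- by move=> y; apply: le_trans (chain_inf_le y A_q0) (q0_le y).
- exact: le_trans (chain_inf_le (- h) A_q0) q0_h.
split=> [y1 y2 | ].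
  apply/ler_addgt0Pr => e e0; have e2 : 0 < e / 2 by rewrite divr_gt0.
  have [_ [q1 Aq1 <-] h1] := inf_adherent e2 (has_inf_chain y1).
  have [_ [q2 Aq2 <-] h2] := inf_adherent e2 (has_inf_chain y2).
  suff [q [Aq q_y1 q_y2]] : exists q, [/\ A q, q y1 <= q1 y1 & q y2 <= q2 y2].
    have [[q_sub _] _ _] := A_candidate Aq; have := q_sub y1 y2.
    by have := chain_inf_le (y1 + y2) Aq; rewrite /chain_inf in h1 h2 *; lra.
  by have [q12 | q21] := A_total Aq1 Aq2; [exists q1; rewrite q12 | exists q2; rewrite q21].
apply: pos_homogeneous_le => r y rp; rewrite -ler_pdivrMl //.
apply: lb_le_inf; first by case: (has_inf_chain y).
move=> _ [q Aq <-]; rewrite ler_pdivrMl //; apply: le_trans (chain_inf_le _ Aq) _.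
by have [[_ ->]] := A_candidate Aq.
Qed.

End Chain.

Theorem hahn_banach : exists g : X -> R,
  [/\ {morph g : x y / x + y}, forall (r : R) x, g (r *: x) = r * g x,
      forall x, g x <= p x & g h = p h].
Proof.
pose below (a b : {q | hb_candidate q}) := `[< forall y, sval b y <= sval a y >].
have [a | a b c | A A_total | [q q_cand] q_min] :=
    ZL_preorder (exist _ _ hb_candidate_dir_inf) (R := below).
- by apply/asboolP => y.
- by move=> /asboolP ab /asboolP bc; apply/asboolP => y; apply: le_trans (bc y) (ab y).
- have [[a0 Aa0] | A0] := pselect (A !=set0); last first.
    by exists (exist _ _ hb_candidate_dir_inf) => a Aa; case: A0; exists a.
  pose B := [set sval a | a in A].
  have B_cand q : B q -> hb_candidate q by move=> [[q' ?] _ <-].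
  have B_total q1 q2 : B q1 -> B q2 -> (forall y, q1 y <= q2 y) \/ (forall y, q2 y <= q1 y).
    move=> [a1 Aa1 <-] [a2 Aa2 <-].
    by have [/asboolP | /asboolP] := A_total _ _ Aa1 Aa2; [right | left].
  have B_q0 : B (sval a0) by exists a0.
  exists (exist _ _ (chain_inf_candidate B_cand B_total B_q0)) => a Aa.
  by apply/asboolP => y; apply: (chain_inf_le B_cand B_q0); exists a.
have [q_sub q_le q_h] := q_cand.
have q_superadd x y : q x + q y <= q (x + y).
  have dir_cand : hb_candidate (dir_inf q x).
    split; [exact: dir_inf_sublinear | move=> z | ].
      exact: le_trans (dir_inf_le_self q_sub x z) (q_le z).
    exact: le_trans (dir_inf_le_self q_sub x (- h)) q_h.
  have /asboolP := q_min (exist _ _ dir_cand) (asboolT (dir_inf_le_self q_sub x)).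
  by move=> /(_ y) /= dir_ge; have := dir_inf_shift q_sub x y; rewrite (addrC y); lra.
have q_add : {morph q : x y / x + y}.
  by move=> x y; apply/eqP; rewrite eq_le q_sub.1 q_superadd.
have q_opp x : q (- x) = - q x.
  by have := q_add x (- x); rewrite addrN sublinear0 //; lra.
exists q; split => //.
- move=> r x; have [rn | r0] := ltrP r 0; last exact: sublinearZ_ge0.
  by rewrite -(opprK r) scaleNr q_opp q_sub.2 ?oppr_gt0 //; lra.
- by apply/eqP; rewrite eq_le q_le /=; have := q_opp h; lra.
Qed.

End HahnBanach.

(** * Selfadjoint functionals *)

(* Restriction of scalars from [R[i]] to [R]. *)
Definition realmod (R : realType) (X : lmodType R[i]) : Type := X.

Section Realmod.
Variables (R : realType) (X : lmodType R[i]).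
Local Notation C := R[i].

HB.instance Definition _ := GRing.Zmodule.on (realmod X).

Definition realmod_scale (r : R) (x : realmod X) : realmod X := (r%:C%C : C) *: (x : X).

Lemma realmod_scaleA (r s : R) x : realmod_scale r (realmod_scale s x) = realmod_scale (r * s) x.
Proof. by rewrite /realmod_scale scalerA; congr (_ *: _); apply: complex_ext => /=; ring. Qed.

Lemma realmod_scale1 : left_id 1 realmod_scale.
Proof. by move=> x; rewrite /realmod_scale (_ : 1%:C%C = 1) ?scale1r. Qed.

Lemma realmod_scaleDr : right_distributive realmod_scale +%R.
Proof. by move=> r x y; rewrite /realmod_scale scalerDr. Qed.

Lemma realmod_scaleDl x : {morph realmod_scale^~ x : r s / r + s}.
Proof.
by move=> r s; rewrite /realmod_scale -scalerDl; congr (_ *: _); apply: complex_ext => /=; ring.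
Qed.

HB.instance Definition _ := GRing.Zmodule_isLmodule.Build R (realmod X)
  realmod_scaleA realmod_scale1 realmod_scaleDr realmod_scaleDl.

End Realmod.

Section SelfadjointFunctional.
Variables (R : realType) (X : lmodType R[i]).
Local Notation C := R[i].
Variable p : X -> R.
Hypothesis pD : forall x y, p (x + y) <= p x + p y.
Hypothesis pZ : forall (a : C) x, p (a *: x) = cabs a * p x.

Lemma seminorm_ge0 x : 0 <= p x.
Proof.
have := pD x (- x); rewrite addrN -scaleN1r pZ.
have -> : p 0 = 0 by rewrite -(scale0r 0) pZ /cabs Normc.normc0 mul0r.
rewrite (_ : -1 = (-1)%:C%C :> C) ?cabs_real ?normrN1; first lra.
by apply: complex_ext => /=; rewrite ?oppr0.
Qed.

(* The bound on [|F x|] comes from [g ((F x)^* *: x) = |F x|^2]. *)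
Lemma complexify (g : X -> R) :
  {morph g : x y / x + y} -> (forall (r : R) x, g (r%:C%C *: x) = r * g x) ->
  (forall x, g x <= p x) ->
  exists F : X -> C, [/\ forall (a : C) x y, F (a *: x + y) = a * F x + F y,
    forall x, Re (F x) = g x, forall x, Im (F x) = - g ('i%C *: x)
    & forall x, cabs (F x) <= p x].
Proof.
move=> gD gZ g_le; pose F x := (g x +i* - g ('i%C *: x))%C.
have decomp (c : C) z : c *: z = (Re c)%:C%C *: z + (Im c)%:C%C *: ('i%C *: z).
  by rewrite scalerA -scalerDl; congr (_ *: _); case: c => a b; apply: complex_ext => /=; ring.
have F_lin (a : C) x y : F (a *: x + y) = a * F x + F y.
  case: a => a b; apply: complex_ext; rewrite /F /=.
    by rewrite gD decomp gD !gZ /=; ring.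
  by rewrite scalerDr scalerA gD decomp gD !gZ /=; ring.
exists F; split => // x; set w := F x.
have Re_conj_w : g (w^*%C *: x) = sqnormc w.
  have g0 : g 0 = 0 by have := gD 0 0; rewrite addr0; lra.
  have F0 : F 0 = 0 by apply: complex_ext; rewrite /F /= ?scaler0 g0 ?oppr0.
  have := F_lin w^*%C x 0; rewrite !addr0 F0 addr0.
  by move=> /(congr1 (@complex.Re R)) /= ->; rewrite /sqnormc /w /F /=; ring.
have := g_le (w^*%C *: x); rewrite Re_conj_w pZ cabsJ -sqr_cabs.
by have := cabs_ge0 w; have := seminorm_ge0 x; rewrite expr2; nra.
Qed.

Variable st : X -> X.
Hypothesis stK : involutive st.
Hypothesis st_antilinear : forall (a : C) x y, st (a *: x + y) = a^*%C *: st x + st y.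
Hypothesis p_st : forall x, p (st x) = p x.

Lemma stD : {morph st : x y / x + y}.
Proof. by move=> x y; rewrite -[x]scale1r st_antilinear conjc1 !scale1r. Qed.

Lemma stZ (a : C) x : st (a *: x) = a^*%C *: st x.
Proof.
have st0 : st 0 = 0 by apply: (addrI (st 0)); rewrite -stD !addr0.
by rewrite -[a *: x]addr0 st_antilinear st0 addr0.
Qed.

Lemma selfadjoint_functional h : exists F : X -> C,
  [/\ forall (a : C) x y, F (a *: x + y) = a * F x + F y,
      forall x, F (st x) = (F x)^*%C,
      forall x, cabs (F x) <= p x &
      st h = h -> Re (F h) = p h].
Proof.
have p_sublinear : sublinear (p : realmod X -> R).
  split=> [x y | r x rp]; first exact: pD.
  by rewrite [LHS]pZ cabs_real gtr0_norm.
have [g0 [g0D g0Z g0_le g0h]] := hahn_banach p_sublinear h.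
pose g x := (g0 x + g0 (st x)) / 2.
have gD : {morph g : x y / x + y} by move=> x y; rewrite /g stD !g0D; lra.
have gZ (r : R) x : g (r%:C%C *: x) = r * g x.
  have g0Z' (y : X) : g0 (r%:C%C *: y) = r * g0 y := g0Z r y.
  by rewrite /g stZ conjc_real !g0Z'; lra.
have g_st x : g (st x) = g x by rewrite /g stK; lra.
have g_le x : g x <= p x by have := g0_le x; have := g0_le (st x); rewrite p_st /g; lra.
have [F [F_lin F_Re F_Im F_le]] := complexify gD gZ g_le.
exists F; split => // [x | sth]; last by rewrite F_Re /g sth g0h; lra.
apply: complex_ext; first by rewrite ReJ !F_Re g_st.
rewrite ImJ !F_Im; have -> : 'i%C *: st x = st ((-1)%:C%C *: ('i%C *: x)).
  by rewrite stZ stZ conjc_real scalerA; congr (_ *: _); apply: complex_ext => /=; ring.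
by rewrite g_st gZ; ring.
Qed.

End SelfadjointFunctional.

(** * Multiplication operators on l^2(S) *)

Section Multiplier.
Variables (R : realType) (S : eqType).
Local Notation C := R[i].
Local Notation H := (l2 R S).
Local Notation l2_norm := (hnorm (@l2_dot R S)).
Variables (m : S -> C) (B : R).
Hypothesis m_le : forall s, cabs (m s) <= B.

Lemma sqnormc_mul_le (z : C) s : sqnormc (m s * z) <= B ^+ 2 * sqnormc z.
Proof.
rewrite sqnormcM -sqr_cabs ler_wpM2r ?sqnormc_ge0 // ler_sqr ?nnegrE ?cabs_ge0 //.
exact: le_trans (cabs_ge0 _) (m_le s).
Qed.

Lemma square_summable_mul (u : H) : square_summable (fun s => m s * u s).
Proof.
apply: summable_le (summableZ (sqr_ge0 B) (l2_square_summable u)) => s.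
exact: sqnormc_mul_le.
Qed.

Definition mulop (u : H) : H := L2 (square_summable_mul u).

Lemma mulopE u s : mulop u s = m s * u s.
Proof. by []. Qed.

Lemma l2_norm_mulop u : l2_norm (mulop u) <= `|B| * l2_norm u.
Proof.
rewrite -ler_sqr ?nnegrE ?mulr_ge0 ?l2_norm_ge0 // exprMn real_normK ?num_real //.
rewrite !sqr_l2_norm -nnsumZ ?sqr_ge0 //; last exact: l2_square_summable.
  apply: ler_nnsum => [s | ]; first exact: sqnormc_mul_le.
  by apply: summableZ (l2_square_summable u); exact: sqr_ge0.
by move=> s; exact: sqnormc_ge0.
Qed.

Lemma mulop_bounded : bounded_op (@l2_dot R S) mulop.
Proof.
split=> [a u v | ]; first by apply: l2_ext => s /=; ring.
by exists `|B|; exact: l2_norm_mulop.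
Qed.

Hypothesis B_ge0 : 0 <= B.

Lemma Re_mul_l2_dot_mulop_le (c : C) u :
  Re (c * l2_dot (mulop u) u) <= cabs c * B * l2_norm u ^+ 2.
Proof.
have cB0 : 0 <= cabs c * B by rewrite mulr_ge0 ?cabs_ge0.
have sq_ge0 s : 0 <= sqnormc (u s) by exact: sqnormc_ge0.
have su := l2_square_summable u.
rewrite -l2_dotZ /= sqr_l2_norm -(nnsumZ cB0 sq_ge0 su) -asum_nnsum; last 2 first.
- by move=> s; rewrite mulr_ge0.
- exact: summableZ.
apply: ler_asum; first exact: abs_summable_dot_Re.
  by apply: abs_summable_le (summableZ cB0 su) => s; rewrite ger0_norm // mulr_ge0.
move=> s; rewrite /l2_dot_Re /=.
have -> : Re (c * (m s * u s) * (u s)^*%C) = Re (c * m s) * sqnormc (u s).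
  by rewrite mulrA /sqnormc; case: (c * m s) (u s) => [a b] [x y] /=; ring.
apply: ler_wpM2r => //; apply: le_trans (Re_le_cabs _) _.
by rewrite cabsM ler_wpM2l ?cabs_ge0.
Qed.

Lemma cabs_l2_dot_mulop_le u : cabs (l2_dot (mulop u) u) <= B * l2_norm u ^+ 2.
Proof.
set w := l2_dot (mulop u) u.
(* Testing against the phase [w^*] turns the bound on real parts into a bound on [|w|]. *)
have := Re_mul_l2_dot_mulop_le w^*%C u.
have -> : Re (w^*%C * w) = cabs w ^+ 2 by rewrite sqr_cabs /sqnormc; case: (w) => a b /=; ring.
rewrite cabsJ -mulrA; have := cabs_ge0 w; rewrite le_eqVlt => /predU1P[<- _ | w_gt0].
  by rewrite mulr_ge0 ?sqr_ge0.
by rewrite expr2 ler_pM2l.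
Qed.

Lemma l2_norm_mulop_ball u : unit_ball (@l2_dot R S) u -> l2_norm (mulop u) <= B.
Proof.
move=> u1; apply: le_trans (l2_norm_mulop u) _.
by rewrite ger0_norm // ler_piMr ?l2_norm_ge0.
Qed.

Lemma numrad_mulop_le : numrad (@l2_dot R S) mulop <= B.
Proof.
apply: ge_sup; first by exists (cabs (l2_dot (mulop 0) 0)); exists 0; rewrite // /unit_ball /= l2_norm0.
move=> _ [u u1 <-]; apply: le_trans (cabs_l2_dot_mulop_le u) _.
rewrite ler_piMr // expr_le1 ?l2_norm_ge0 //.
Qed.

Lemma hopnorm_mulop_le : hopnorm (@l2_dot R S) mulop <= B.
Proof.
apply: ge_sup; first by exists (l2_norm (mulop 0)); exists 0; rewrite // /unit_ball /= l2_norm0.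
by move=> _ [u u1 <-]; apply: l2_norm_mulop_ball.
Qed.

Lemma sum_sqnormc_delta_le1 s0 (A : seq S) : uniq A ->
  \sum_(s <- A) sqnormc ((s == s0)%:R : C) <= 1.
Proof.
move=> uA; rewrite (bigID (pred1 s0)) /= [X in _ + X]big1 => [|s /negbTE->]; last first.
  by rewrite /sqnormc /= expr0n /= addr0.
rewrite addr0; apply: le_trans (_ : \sum_(s <- A | s == s0) 1 <= _).
  by apply: ler_sum => s /eqP->; rewrite eqxx /sqnormc /= expr0n /= addr0 expr1n.
rewrite -big_filter big_const_seq count_predT iter_addr addr0 -[leRHS]mulr1n ler_wpMn2l //.
by rewrite size_filter (count_uniq_mem s0 uA) leq_b1.
Qed.

Definition delta s0 : H := L2 (ex_intro _ 1 (@sum_sqnormc_delta_le1 s0)).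

Lemma l2_norm_delta_le1 s0 : l2_norm (delta s0) <= 1.
Proof.
rewrite -ler_sqr ?nnegrE ?l2_norm_ge0 // expr1n sqr_l2_norm.
exact/nnsum_le/sum_sqnormc_delta_le1.
Qed.

Lemma cabs_le_hopnorm_mulop s0 : cabs (m s0) <= hopnorm (@l2_dot R S) mulop.
Proof.
apply: le_trans (_ : l2_norm (mulop (delta s0)) <= _).
  rewrite -ler_sqr ?nnegrE ?cabs_ge0 ?l2_norm_ge0 // sqr_cabs.
  by apply: le_trans (sqnormc_le_l2_norm _ s0); rewrite mulopE /= eqxx mulr1.
apply: sup_upper_bound; last by exists (delta s0); first exact: l2_norm_delta_le1.
split; first by exists (l2_norm (mulop 0)); exists 0; rewrite // /unit_ball /= l2_norm0.
by exists B => _ [u u1 <-]; apply: l2_norm_mulop_ball.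
Qed.

End Multiplier.

Lemma l2_dot_mulop_adjoint (R : realType) (S : eqType) (m m' : S -> R[i]) (B B' : R)
    (m_le : forall s, cabs (m s) <= B) (m'_le : forall s, cabs (m' s) <= B') :
    (forall s, m' s = (m s)^*%C) ->
  forall u w, l2_dot (mulop m_le u) w = l2_dot u (mulop m'_le w).
Proof.
move=> m'E u w; have e s : m s * u s * (w s)^*%C = u s * (m' s * w s)^*%C.
  by rewrite m'E; case: (m s) (u s) (w s) => [a b] [c d] [e f]; apply: complex_ext => /=; ring.
by congr Complex; congr asum; apply: funext => s; rewrite /l2_dot_Re /l2_dot_Im /= e.
Qed.

(* [M_n(V)] as a complex vector space, with the entrywise scaling [mxscale]. *)
Definition cmx (R : realType) (V : lmodType R[i]) n : Type := 'M[V]_n.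

Section ComplexMatrices.
Variables (R : realType) (V : lmodType R[i]) (n : nat).
Local Notation C := R[i].

HB.instance Definition _ := GRing.Zmodule.on (cmx V n).

Lemma mxscaleA (a b : C) (x : cmx V n) : mxscale a (mxscale b x) = mxscale (a * b) x.
Proof. by apply/matrixP => i j; rewrite !mxE scalerA. Qed.

Lemma mxscale1 : left_id 1 (@mxscale R V n).
Proof. by move=> x; apply/matrixP => i j; rewrite !mxE scale1r. Qed.

Lemma mxscaleDr : right_distributive (@mxscale R V n) +%R.
Proof. by move=> a x y; apply/matrixP => i j; rewrite !mxE scalerDr. Qed.

Lemma mxscaleDl (x : cmx V n) : {morph (@mxscale R V n)^~ x : a b / a + b}.
Proof. by move=> a b; apply/matrixP => i j; rewrite !mxE scalerDl. Qed.

HB.instance Definition _ := GRing.Zmodule_isLmodule.Build C (cmx V n)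
  mxscaleA mxscale1 mxscaleDr mxscaleDl.

Variable star : V -> V.
Hypothesis star_inv : antilinear_involution star.

Lemma mxstarK : involutive (@mxstar R V star n : cmx V n -> cmx V n).
Proof. by move=> x; apply/matrixP => i j; rewrite !mxE star_inv.1. Qed.

Lemma mxstar_antilinear (a : C) (x y : cmx V n) :
  mxstar star (a *: x + y) = a^*%C *: (mxstar star x : cmx V n) + mxstar star y.
Proof. by apply/matrixP => i j; rewrite !mxE star_inv.2. Qed.

End ComplexMatrices.

Theorem mainTheorem7 (R : realType) (V : lmodType (R[i])) (star : V -> V)
    (ns : forall n : nat, 'M[V]_n -> R) :
  abstract_h_strong_super_operator_space star ns ->
  forall n : nat,
    exists (H : lmodType (R[i])) (ip : H -> H -> R[i]) (nu : 'M[V]_n -> H -> H),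
      is_hilbert ip /\ [/\
          (forall x : 'M[V]_n, bounded_op ip (nu x)),
          (forall (a : R[i]) (x y : 'M[V]_n) (u : H),
              nu (mxscale a x + y) u = a *: nu x u + nu y u),
          (forall (x : 'M[V]_n) (u w : H), ip (nu x u) w = ip u (nu (mxstar star x) w)),
          (forall x : 'M[V]_n, numrad ip (nu x) <= ns n x) &
          (forall x : 'M[V]_n, mxstar star x = x -> hopnorm ip (nu x) = ns n x)].
Proof.
move=> [star_inv [ns_norm [_ [_ [_ [ns_star _]]]]]] n.
have [_ [nsZ nsD]] := ns_norm n.
have ns_ge0 := seminorm_ge0 (nsD : forall x y : cmx V n, _) nsZ.
have [F F_spec] := choice (selfadjoint_functional (nsD : forall x y : cmx V n, _) nsZ
  (mxstarK star_inv) (mxstar_antilinear star_inv) (ns_star n)).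
have F_le s x : cabs (F s x) <= ns n x by case: (F_spec s).
pose nu x := mulop (F_le^~ x).
exists (l2 R 'M[V]_n), (@l2_dot R _), nu; split; first exact: l2_is_hilbert.
split=> [x | a x y u | x u w | x | x x_herm].
- exact: mulop_bounded.
- by apply: l2_ext => s /=; have [-> _ _ _] := F_spec s; ring.
- by apply: l2_dot_mulop_adjoint => s; have [_ -> _ _] := F_spec s.
- exact: numrad_mulop_le.
- apply/eqP; rewrite eq_le hopnorm_mulop_le //=.
  have [_ _ _ /(_ x_herm) <-] := F_spec x.
  exact: le_trans (Re_le_cabs _) (cabs_le_hopnorm_mulop _ (ns_ge0 x) x).
Qed.
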